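(* Let $(\Lambda,d)$ be a $2$-graph such that $\Lambda$ is row-finite, the blue graph $\Lambda_{\mathrm b}$ contains no cycles, and each vertex is the range of an isolated cycle lying in the red graph $\Lambda_{\mathrm r}$. Let $\lambda_1,\lambda_2$ be isolated cycles in $\Lambda_{\mathrm r}$ and let $V_1,V_2$ be the sets of vertices on $\lambda_1,\lambda_2$. (1) For every red path $\mu$ with $r(\mu)\in V_1$, the map $\sigma\mapsto\mathcal F_1(\mu,\sigma)$ is a degree-preserving bijection from $s(\mu)\Lambda_{\mathrm b}V_2$ onto $r(\mu)\Lambda_{\mathrm b}V_2$. (2) For every red path $\nu$ with $r(\nu)\in V_2$, the map $\sigma\mapsto\mathcal F_2(\sigma,\nu)$ is a degree-preserving bijection from $V_1\Lambda_{\mathrm b}r(\nu)$ onto $V_1\Lambda_{\mathrm b}s(\nu)$.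
   Context: A $2$-graph is a countable category $\Lambda$ with a functor $d:\Lambda\to\mathbb N^2$ satisfying the unique factorisation property (if $d(\lambda)=m+n$ there are unique $\mu,\nu$ with $d(\mu)=m,d(\nu)=n,\lambda=\mu\nu$). Vertices $\Lambda^0$ are the degree-$0$ paths; $r,s$ are range and source; $\mu\nu$ is defined when $s(\mu)=r(\nu)$; $\Lambda^n=d^{-1}(n)$, $e_1=(1,0)$, $e_2=(0,1)$. For sets $V,W$ of vertices and $E\subseteq\Lambda$, $VEW=\{\lambda\in E:r(\lambda)\in V,s(\lambda)\in W\}$ (with $v$ for $\{v\}$). For $0\le m\le n\le d(\lambda)$, $\lambda(m,n)$ is the unique path with $\lambda=\lambda'\lambda(m,n)\lambda''$, $d(\lambda')=m$, $d(\lambda(m,n))=n-m$, and $\lambda(n)=\lambda(n,n)$. Blue paths: degree in $\mathbb Ne_1$; red paths: degree in $\mathbb Ne_2$; $\Lambda_{\mathrm b},\Lambda_{\mathrm r}$ the sets of blue/red paths. Row-finite: $v\Lambda^n$ finite for all $v,n$. A cycle is a path $\lambda$ with $d(\lambda)\ne0$, $r(\lambda)=s(\lambda)$, $\lambda(n)\neq s(\lambda)$ for $0<n<d(\lambda)$; it is isolated if there is no $n\le d(\lambda)$ with $r(\lambda)\Lambda^n\setminus\{\lambda(0,n)\}\ne\emptyset$ and no $n\le d(\lambda)$ with $\Lambda^ns(\lambda)\setminus\{\lambda(d(\lambda)-n,d(\lambda))\}\neq\emptyset$. For $\rho,\tau$ with $s(\rho)=r(\tau)$, $\mathcal F_1(\rho,\tau):=(\rho\tau)(0,d(\tau))$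 and $\mathcal F_2(\rho,\tau):=(\rho\tau)(d(\tau),d(\rho\tau))$, so $\mathcal F_1(\rho,\tau)\mathcal F_2(\rho,\tau)=\rho\tau$. *)

(* A 2-graph encoded as a small category with degree functor. *)
From Stdlib Require Import List Arith.
Set Implicit Arguments.

Definition deg := (nat * nat)%type.
Definition dadd (m n : deg) : deg := (fst m + fst n, snd m + snd n).
Definition dsub (m n : deg) : deg := (fst m - fst n, snd m - snd n).
Definition dle (m n : deg) : Prop := fst m <= fst n /\ snd m <= snd n.
Definition d0 : deg := (0, 0).

(* A 2-graph: objects (vertices) V, morphisms (paths) P, identity, composition
   [comp mu nu] = mu nu (meaningful when s mu = r nu), degree functor dg, and
   the factorisation map [fac l m] = (mu, nu) with d(mu)=m, l = mu nu. *)
Record twograph := {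
  V : Type;
  P : Type;
  rg : P -> V;
  sc : P -> V;
  idp : V -> P;
  comp : P -> P -> P;
  dg : P -> deg;
  fac : P -> deg -> P * P;
  P_countable : exists f : P -> nat, forall x y, f x = f y -> x = y;
  rg_id : forall v, rg (idp v) = v;
  sc_id : forall v, sc (idp v) = v;
  dg_id : forall v, dg (idp v) = d0;
  comp_id_l : forall x, comp (idp (rg x)) x = x;
  comp_id_r : forall x, comp x (idp (sc x)) = x;
  rg_comp : forall x y, sc x = rg y -> rg (comp x y) = rg x;
  sc_comp : forall x y, sc x = rg y -> sc (comp x y) = sc y;
  dg_comp : forall x y, sc x = rg y -> dg (comp x y) = dadd (dg x) (dg y);
  comp_assoc : forall x y z, sc x = rg y -> sc y = rg z ->
      comp (comp x y) z = comp x (comp y z);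
  fac_spec : forall l m n, dg l = dadd m n ->
      sc (fst (fac l m)) = rg (snd (fac l m)) /\ dg (fst (fac l m)) = m /\
      dg (snd (fac l m)) = n /\ comp (fst (fac l m)) (snd (fac l m)) = l;
  fac_unique : forall l m n mu nu, dg l = dadd m n ->
      sc mu = rg nu -> dg mu = m -> dg nu = n -> comp mu nu = l ->
      mu = fst (fac l m) /\ nu = snd (fac l m)
}.

Section Defs.
Variable L : twograph.

(* lambda(m,n) for 0 <= m <= n <= d(lambda) *)
Definition seg (l : P L) (m n : deg) : P L := snd (fac L (fst (fac L l n)) m).
Definition pt (l : P L) (n : deg) : P L := seg l n n.

Definition F1 (rho tau : P L) : P L := seg (comp L rho tau) d0 (dg L tau).
Definition F2 (rho tau : P L) : P L :=
  seg (comp L rho tau) (dg L tau) (dg L (comp L rho tau)).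

Definition blue (x : P L) : Prop := snd (dg L x) = 0.
Definition red (x : P L) : Prop := fst (dg L x) = 0.

Definition row_finite : Prop :=
  forall (v : V L) (n : deg), exists lst : list (P L),
    forall x, rg L x = v -> dg L x = n -> In x lst.

Definition cycle (l : P L) : Prop :=
  dg L l <> d0 /\ rg L l = sc L l /\
  forall n, dle n (dg L l) -> n <> d0 -> n <> dg L l ->
    pt l n <> idp L (sc L l).

Definition isolated_cycle (l : P L) : Prop :=
  cycle l /\
  (forall n x, dle n (dg L l) -> rg L x = rg L l -> dg L x = n ->
     x = seg l d0 n) /\
  (forall n x, dle n (dg L l) -> sc L x = sc L l -> dg L x = n ->
     x = seg l (dsub (dg L l) n) (dg L l)).

Definition on_path (l : P L) (v : V L) : Prop :=
  exists n, dle n (dg L l) /\ pt l n = idp L v.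

End Defs.
Arguments seg {L}. Arguments pt {L}. Arguments F1 {L}. Arguments F2 {L}.
Arguments blue {L}. Arguments red {L}. Arguments cycle {L}.
Arguments isolated_cycle {L}. Arguments on_path {L}.

From Stdlib Require Import List Arith Lia.

(* Only the isolated red cycles matter.  Because every vertex is the range of an isolated red
   cycle, every vertex has exactly one red edge leaving it and one entering it,
   so a red path is determined by its degree and either endpoint, and one
   exists for every degree and endpoint.  Hence the vertex set of a red cycle is
   closed under red paths in both directions.

   For (1), factor mu sg = F1(mu,sg) F2(mu,sg).  The red path F2(mu,sg) ends at
   s(sg) in V2, so it starts in V2; if F1(mu,sg) = F1(mu,sg') then the two red
   parts have the same range and degree, hence agree, and unique factorisation
   cancels mu.  Conversely, given tau, let rho be the red path of degree d(mu)
   from s(tau) and refactor tau rho = mu' sg: the red path mu' has the range and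
   degree of mu, so mu' = mu and F1(mu,sg) = tau.  Part (2) is the mirror
   image. *)

Lemma dadd_comm (m n : deg) : dadd m n = dadd n m.
Proof. unfold dadd. f_equal; apply Nat.add_comm. Qed.

Section TwoGraph.
Context {L : twograph}.

Lemma red_deg (x : P L) : red x -> dg L x = (0, snd (dg L x)).
Proof. unfold red. destruct (dg L x); simpl. now intros ->. Qed.

Lemma path_split (l : P L) (m n : deg) : dg L l = dadd m n ->
  exists a b, sc L a = rg L b /\ dg L a = m /\ dg L b = n /\ comp L a b = l /\
    rg L a = rg L l /\ sc L b = sc L l.
Proof.
  intro Hl. destruct (fac_spec L l Hl) as (Hab & Ha & Hb & Hl').
  set (a := fst (fac L l m)) in *. set (b := snd (fac L l m)) in *.
  exists a, b. rewrite <- Hl', rg_comp, sc_comp by exact Hab. repeat split; assumption.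
Qed.

Lemma fac_comp (a b : P L) : sc L a = rg L b -> fac L (comp L a b) (dg L a) = (a, b).
Proof.
  intro Hab.
  destruct (fac_unique L a b (dg_comp L a b Hab) Hab eq_refl eq_refl eq_refl) as [Ea Eb].
  now rewrite (surjective_pairing (fac L _ _)), <- Ea, <- Eb.
Qed.

Lemma comp_inj (a b a' b' : P L) : sc L a = rg L b -> sc L a' = rg L b' ->
  dg L a = dg L a' -> comp L a b = comp L a' b' -> a = a' /\ b = b'.
Proof.
  intros Hab Hab' Hd Hc.
  pose proof (fac_comp a b Hab) as E. rewrite Hc, Hd, (fac_comp a' b' Hab') in E.
  injection E. auto.
Qed.

Lemma fac_d0 (x : P L) : fac L x d0 = (idp L (rg L x), x).
Proof.
  pose proof (fac_comp _ _ (sc_id L (rg L x))) as E.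
  now rewrite comp_id_l, dg_id in E.
Qed.

Lemma fac_dg (x : P L) : fac L x (dg L x) = (x, idp L (sc L x)).
Proof.
  pose proof (fac_comp _ _ (eq_sym (rg_id L (sc L x)))) as E.
  now rewrite comp_id_r in E.
Qed.

Lemma deg0_idp (x : P L) : dg L x = d0 -> x = idp L (rg L x).
Proof.
  intro Hx. pose proof (fac_dg x) as E. rewrite Hx, fac_d0 in E.
  injection E. auto.
Qed.

Lemma F1_fst_fac (rho tau : P L) : F1 rho tau = fst (fac L (comp L rho tau) (dg L tau)).
Proof. unfold F1, seg. now rewrite fac_d0. Qed.

Lemma F2_snd_fac (rho tau : P L) : F2 rho tau = snd (fac L (comp L rho tau) (dg L tau)).
Proof. unfold F2, seg. now rewrite fac_dg. Qed.

Lemma F1_F2_spec (rho tau : P L) : sc L rho = rg L tau ->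
  sc L (F1 rho tau) = rg L (F2 rho tau) /\ dg L (F1 rho tau) = dg L tau /\
  dg L (F2 rho tau) = dg L rho /\ comp L (F1 rho tau) (F2 rho tau) = comp L rho tau.
Proof.
  intro H. rewrite F1_fst_fac, F2_snd_fac.
  apply fac_spec. rewrite dg_comp by exact H. apply dadd_comm.
Qed.

Lemma F1_F2_unique (rho tau a b : P L) : sc L rho = rg L tau -> sc L a = rg L b ->
  dg L a = dg L tau -> comp L a b = comp L rho tau -> F1 rho tau = a /\ F2 rho tau = b.
Proof.
  intros H Hab Ha Hc. destruct (F1_F2_spec rho tau H) as (H' & Hd & _ & Hc').
  apply comp_inj; congruence.
Qed.

Lemma on_path_split (l : P L) (v : V L) :
  on_path l v <-> exists a b, sc L a = v /\ rg L b = v /\ comp L a b = l.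
Proof.
  split.
  - intros (n & Hle & Hpt).
    assert (Hl : dg L l = dadd n (dsub (dg L l) n)).
    { unfold dle, dadd, dsub in *. destruct (dg L l), n; simpl in *. f_equal; lia. }
    destruct (path_split l _ _ Hl) as (a & b & Hab & Ha & _ & <- & _).
    exists a, b. unfold pt, seg in Hpt. rewrite <- Ha, fac_comp, fac_dg in Hpt by exact Hab.
    apply (f_equal (sc L)) in Hpt. simpl in Hpt. rewrite !sc_id in Hpt. repeat split; congruence.
  - intros (a & b & Ha & Hb & Hl). exists (dg L a). split.
    + rewrite <- Hl, dg_comp by congruence. unfold dle, dadd. simpl. lia.
    + unfold pt, seg. rewrite <- Hl, fac_comp, fac_dg by congruence. simpl. congruence.
Qed.

Lemma red_of_dg (x : P L) (k : nat) : dg L x = (0, k) -> red x.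
Proof. unfold red. now intros ->. Qed.

Lemma red_comp (a b : P L) : sc L a = rg L b -> red (comp L a b) <-> red a /\ red b.
Proof. intro Hab. unfold red. rewrite dg_comp by exact Hab. simpl. lia. Qed.

Lemma red_cycle_deg_pos (l : P L) : red l -> cycle l -> 0 < snd (dg L l).
Proof.
  intros Hr [Hd _]. pose proof (red_deg l Hr) as E.
  destruct (snd (dg L l)); [now destruct (Hd E) | lia].
Qed.

Section RedCycles.
Hypothesis red_cycle_at : forall v : V L, exists l : P L,
  red l /\ isolated_cycle l /\ rg L l = v.

Lemma red_edge_unique_rg (e f : P L) :
  dg L e = (0, 1) -> dg L f = (0, 1) -> rg L e = rg L f -> e = f.
Proof.
  intros He Hf Hef. destruct (red_cycle_at (rg L e)) as (c & Hr & (Hc & Hiso & _) & Hrc).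
  pose proof (red_deg c Hr) as Hd. pose proof (red_cycle_deg_pos c Hr Hc) as HK.
  assert (Hle : dle (0, 1) (dg L c)) by (rewrite Hd; unfold dle; simpl; lia).
  rewrite (Hiso _ e Hle), (Hiso _ f Hle); congruence.
Qed.

Lemma red_edge_unique_sc (e f : P L) :
  dg L e = (0, 1) -> dg L f = (0, 1) -> sc L e = sc L f -> e = f.
Proof.
  intros He Hf Hef. destruct (red_cycle_at (sc L e)) as (c & Hr & (Hc & _ & Hiso) & Hrc).
  pose proof (red_deg c Hr) as Hd. pose proof (red_cycle_deg_pos c Hr Hc) as HK.
  destruct Hc as (_ & Hrs & _).
  assert (Hle : dle (0, 1) (dg L c)) by (rewrite Hd; unfold dle; simpl; lia).
  rewrite (Hiso _ e Hle), (Hiso _ f Hle); congruence.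
Qed.

Lemma red_unique_rg (x y : P L) : red x -> dg L x = dg L y -> rg L x = rg L y -> x = y.
Proof.
  intros Hx Hxy. pose proof (red_deg x Hx) as Hdx. rewrite Hxy in Hdx at 1.
  set (k := snd (dg L x)) in Hdx. clearbody k. clear Hx.
  revert x y Hxy Hdx. induction k as [|k IH]; intros x y Hxy Hy Hr.
  - rewrite (deg0_idp x), (deg0_idp y Hy), Hr by (unfold d0; congruence).
    reflexivity.
  - assert (Hx : dg L x = (0, S k)) by congruence.
    destruct (path_split x (0, 1) (0, k) Hx) as (e & x' & He & Hde & Hdx' & <- & Hre & _).
    destruct (path_split y (0, 1) (0, k) Hy) as (f & y' & Hf & Hdf & Hdy' & <- & Hrf & _).
    assert (e = f) as <- by (apply red_edge_unique_rg; congruence).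
    f_equal. apply IH; congruence.
Qed.

Lemma red_unique_sc (x y : P L) : red x -> dg L x = dg L y -> sc L x = sc L y -> x = y.
Proof.
  intros Hx Hxy. pose proof (red_deg x Hx) as Hdx. rewrite Hxy in Hdx at 1.
  set (k := snd (dg L x)) in Hdx. clearbody k. clear Hx.
  revert x y Hxy Hdx. induction k as [|k IH]; intros x y Hxy Hy Hs.
  - assert (Hx : dg L x = d0) by (unfold d0; congruence).
    rewrite (deg0_idp x Hx), (deg0_idp y Hy) in Hs |- *. rewrite !sc_id in Hs.
    now rewrite Hs.
  - assert (Hy' : dg L y = dadd (0, k) (0, 1)) by (rewrite Hy; unfold dadd; simpl; f_equal; lia).
    assert (Hx : dg L x = dadd (0, k) (0, 1)) by congruence.
    destruct (path_split x (0, k) (0, 1) Hx) as (x' & e & He & Hdx' & Hde & <- & _ & Hse).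
    destruct (path_split y (0, k) (0, 1) Hy') as (y' & f & Hf & Hdy' & Hdf & <- & _ & Hsf).
    assert (e = f) as <- by (apply red_edge_unique_sc; congruence).
    f_equal. apply IH; congruence.
Qed.

Lemma red_edge_from (v : V L) : exists e : P L, dg L e = (0, 1) /\ rg L e = v.
Proof.
  destruct (red_cycle_at v) as (c & Hr & (Hc & _) & <-).
  pose proof (red_deg c Hr) as Hd. pose proof (red_cycle_deg_pos c Hr Hc) as HK.
  assert (Hsplit : dg L c = dadd (0, 1) (0, snd (dg L c) - 1))
    by (rewrite Hd at 1; unfold dadd; simpl; f_equal; lia).
  destruct (path_split c _ _ Hsplit) as (e & _ & _ & He & _ & _ & Hre & _).
  eauto.
Qed.

Lemma red_edge_to (v : V L) : exists e : P L, dg L e = (0, 1) /\ sc L e = v.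
Proof.
  destruct (red_cycle_at v) as (c & Hr & (Hc & _) & <-).
  pose proof (red_deg c Hr) as Hd. pose proof (red_cycle_deg_pos c Hr Hc) as HK.
  destruct Hc as (_ & Hrs & _).
  assert (Hsplit : dg L c = dadd (0, snd (dg L c) - 1) (0, 1))
    by (rewrite Hd at 1; unfold dadd; simpl; f_equal; lia).
  destruct (path_split c _ _ Hsplit) as (_ & e & _ & _ & He & _ & _ & Hse).
  exists e. split; congruence.
Qed.

Lemma red_path_from (v : V L) (k : nat) : exists x : P L, dg L x = (0, k) /\ rg L x = v.
Proof.
  revert v. induction k as [|k IH]; intro v.
  - exists (idp L v). split; [apply dg_id | apply rg_id].
  - destruct (red_edge_from v) as (e & He & <-). destruct (IH (sc L e)) as (x & Hx & Hex).
    exists (comp L e x). rewrite dg_comp, rg_comp, He, Hx by congruence. split; reflexivity.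
Qed.

Lemma red_path_to (v : V L) (k : nat) : exists x : P L, dg L x = (0, k) /\ sc L x = v.
Proof.
  revert v. induction k as [|k IH]; intro v.
  - exists (idp L v). split; [apply dg_id | apply sc_id].
  - destruct (red_edge_to v) as (e & He & <-). destruct (IH (rg L e)) as (x & Hx & Hxe).
    exists (comp L x e). rewrite dg_comp, sc_comp, He, Hx by congruence.
    unfold dadd; simpl. split; [f_equal; lia | reflexivity].
Qed.

(* Strong induction on the degree: a red path from the base of l that is longer
   than l begins with l itself. *)
Lemma on_path_red_from_base (l : P L) : red l -> cycle l ->
  forall x, red x -> rg L x = rg L l -> on_path l (sc L x).
Proof.
  intros Hl Hc. pose proof (red_deg l Hl) as Hdl. pose proof (red_cycle_deg_pos l Hl Hc) as HN.
  destruct Hc as (_ & Hrs & _).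
  set (N := snd (dg L l)) in *. clearbody N.
  intros x Hx. pose proof (red_deg x Hx) as Hdx. set (k := snd (dg L x)) in Hdx. clearbody k.
  revert x Hx Hdx. induction k as [k IH] using lt_wf_ind. intros x Hx Hdx Hrx.
  destruct (Nat.le_gt_cases k N) as [Hle | Hgt].
  - assert (Hsplit : dg L l = dadd (0, k) (0, N - k))
      by (rewrite Hdl; unfold dadd; simpl; f_equal; lia).
    destruct (path_split l _ _ Hsplit) as (a & b & Hab & Ha & _ & Hl' & Hra & _).
    assert (a = x) as <- by (apply red_unique_rg; [apply (red_of_dg a k) | ..]; congruence).
    apply on_path_split. exists a, b. auto.
  - assert (Hsplit : dg L x = dadd (0, N) (0, k - N))
      by (rewrite Hdx; unfold dadd; simpl; f_equal; lia).
    destruct (path_split x _ _ Hsplit) as (a & x' & Hax & Ha & Hx' & _ & Hra & <-).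
    assert (a = l) as -> by (apply red_unique_rg; [apply (red_of_dg a N) | ..]; congruence).
    apply (IH (k - N)); [lia | apply (red_of_dg x' (k - N)) | ..]; congruence.
Qed.

Lemma on_path_red_to_base (l : P L) : red l -> cycle l ->
  forall x, red x -> sc L x = sc L l -> on_path l (rg L x).
Proof.
  intros Hl Hc. pose proof (red_deg l Hl) as Hdl. pose proof (red_cycle_deg_pos l Hl Hc) as HN.
  destruct Hc as (_ & Hrs & _).
  set (N := snd (dg L l)) in *. clearbody N.
  intros x Hx. pose proof (red_deg x Hx) as Hdx. set (k := snd (dg L x)) in Hdx. clearbody k.
  revert x Hx Hdx. induction k as [k IH] using lt_wf_ind. intros x Hx Hdx Hsx.
  destruct (Nat.le_gt_cases k N) as [Hle | Hgt].
  - assert (Hsplit : dg L l = dadd (0, N - k) (0, k))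
      by (rewrite Hdl; unfold dadd; simpl; f_equal; lia).
    destruct (path_split l _ _ Hsplit) as (a & b & Hab & _ & Hb & Hl' & _ & Hsb).
    assert (b = x) as <- by (apply red_unique_sc; [apply (red_of_dg b k) | ..]; congruence).
    apply on_path_split. exists a, b. auto.
  - assert (Hsplit : dg L x = dadd (0, k - N) (0, N))
      by (rewrite Hdx; unfold dadd; simpl; f_equal; lia).
    destruct (path_split x _ _ Hsplit) as (x' & a & Hxa & Hx' & Ha & _ & <- & Hsa).
    assert (a = l) as -> by (apply red_unique_sc; [apply (red_of_dg a N) | ..]; congruence).
    apply (IH (k - N)); [lia | apply (red_of_dg x' (k - N)) | ..]; congruence.
Qed.

Lemma on_path_red_sc (l : P L) : red l -> cycle l ->
  forall x, red x -> on_path l (rg L x) -> on_path l (sc L x).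
Proof.
  intros Hl Hc x Hx Hon. apply on_path_split in Hon as (a & b & Hax & Hb & Hab).
  assert (Ha : red a).
  { rewrite <- Hab in Hl. apply red_comp in Hl as [Ha _]; congruence. }
  rewrite <- (sc_comp L a x Hax). apply on_path_red_from_base; auto.
  - now apply red_comp.
  - rewrite rg_comp, <- Hab, rg_comp by congruence. reflexivity.
Qed.

Lemma on_path_red_rg (l : P L) : red l -> cycle l ->
  forall x, red x -> on_path l (sc L x) -> on_path l (rg L x).
Proof.
  intros Hl Hc x Hx Hon. apply on_path_split in Hon as (a & b & Ha & Hxb & Hab).
  rewrite <- Hxb in Ha. symmetry in Hxb.
  assert (Hb : red b).
  { rewrite <- Hab in Hl. apply red_comp in Hl as [_ Hb]; congruence. }
  rewrite <- (rg_comp L x b Hxb). apply on_path_red_to_base; auto.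
  - now apply red_comp.
  - rewrite sc_comp, <- Hab, sc_comp by congruence. reflexivity.
Qed.

Lemma F1_red_injective (mu sg sg' : P L) : red mu ->
  sc L mu = rg L sg -> sc L mu = rg L sg' -> F1 mu sg = F1 mu sg' -> sg = sg'.
Proof.
  intros Hmu Hs Hs' E.
  destruct (F1_F2_spec mu sg Hs) as (Hab & Ha & Hb & Hc).
  destruct (F1_F2_spec mu sg' Hs') as (Hab' & Ha' & Hb' & Hc').
  assert (E2 : F2 mu sg = F2 mu sg').
  { apply red_unique_rg; [unfold red; rewrite Hb; exact Hmu | congruence | congruence]. }
  apply (comp_inj mu sg mu sg' Hs Hs' eq_refl). congruence.
Qed.

Lemma F2_red_injective (sg sg' nu : P L) : red nu ->
  sc L sg = rg L nu -> sc L sg' = rg L nu -> F2 sg nu = F2 sg' nu -> sg = sg'.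
Proof.
  intros Hnu Hs Hs' E.
  destruct (F1_F2_spec sg nu Hs) as (Hab & Ha & Hb & Hc).
  destruct (F1_F2_spec sg' nu Hs') as (Hab' & Ha' & Hb' & Hc').
  assert (E1 : F1 sg nu = F1 sg' nu).
  { apply red_unique_sc; [unfold red; rewrite Ha; exact Hnu | congruence | congruence]. }
  apply (comp_inj sg nu sg' nu Hs Hs'); congruence.
Qed.

Section RedClosedVertices.
Variable W : V L -> Prop.
Hypothesis W_red_sc : forall x, red x -> W (rg L x) -> W (sc L x).
Hypothesis W_red_rg : forall x, red x -> W (sc L x) -> W (rg L x).

Lemma F1_red_maps_to (mu sg : P L) : red mu -> sc L mu = rg L sg -> W (sc L sg) ->
  rg L (F1 mu sg) = rg L mu /\ W (sc L (F1 mu sg)) /\ dg L (F1 mu sg) = dg L sg.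
Proof.
  intros Hmu Hs Hw. destruct (F1_F2_spec mu sg Hs) as (Hab & Ha & Hb & Hc).
  split; [|split; [|exact Ha]].
  - rewrite <- (rg_comp L _ _ Hab), Hc. exact (rg_comp L _ _ Hs).
  - rewrite Hab. apply W_red_rg.
    + unfold red. rewrite Hb. exact Hmu.
    + rewrite <- (sc_comp L _ _ Hab), Hc, sc_comp by exact Hs. exact Hw.
Qed.

Lemma F2_red_maps_to (sg nu : P L) : red nu -> sc L sg = rg L nu -> W (rg L sg) ->
  W (rg L (F2 sg nu)) /\ sc L (F2 sg nu) = sc L nu /\ dg L (F2 sg nu) = dg L sg.
Proof.
  intros Hnu Hs Hw. destruct (F1_F2_spec sg nu Hs) as (Hab & Ha & Hb & Hc).
  split; [|split; [|exact Hb]].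
  - rewrite <- Hab. apply W_red_sc.
    + unfold red. rewrite Ha. exact Hnu.
    + rewrite <- (rg_comp L _ _ Hab), Hc, rg_comp by exact Hs. exact Hw.
  - rewrite <- (sc_comp L _ _ Hab), Hc. exact (sc_comp L _ _ Hs).
Qed.

Lemma F1_red_surjective (mu tau : P L) : red mu -> rg L tau = rg L mu -> W (sc L tau) ->
  exists sg, dg L sg = dg L tau /\ rg L sg = sc L mu /\ W (sc L sg) /\ F1 mu sg = tau.
Proof.
  intros Hmu Hr Hw.
  destruct (red_path_from (sc L tau) (snd (dg L mu))) as (rho & Hdr & Htr).
  rewrite <- (red_deg mu Hmu) in Hdr. symmetry in Htr.
  destruct (F1_F2_spec tau rho Htr) as (Hab & Ha & Hb & Hc).
  assert (Emu : F1 tau rho = mu).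
  { apply red_unique_rg; [unfold red; rewrite Ha, Hdr; exact Hmu | congruence |].
    rewrite <- (rg_comp L _ _ Hab), Hc, rg_comp by exact Htr. exact Hr. }
  rewrite Emu in Hab, Hc.
  exists (F2 tau rho). split; [exact Hb | split; [congruence | split]].
  - rewrite <- (sc_comp L _ _ Hab), Hc, sc_comp by exact Htr.
    apply W_red_sc; [unfold red; rewrite Hdr; exact Hmu | congruence].
  - apply (F1_F2_unique mu (F2 tau rho) tau rho Hab Htr); congruence.
Qed.

Lemma F2_red_surjective (nu tau : P L) : red nu -> sc L tau = sc L nu -> W (rg L tau) ->
  exists sg, dg L sg = dg L tau /\ W (rg L sg) /\ sc L sg = rg L nu /\ F2 sg nu = tau.
Proof.
  intros Hnu Hs Hw.
  destruct (red_path_to (rg L tau) (snd (dg L nu))) as (al & Hda & Hat).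
  rewrite <- (red_deg nu Hnu) in Hda.
  destruct (F1_F2_spec al tau Hat) as (Hab & Ha & Hb & Hc).
  assert (Enu : F2 al tau = nu).
  { apply red_unique_sc; [unfold red; rewrite Hb, Hda; exact Hnu | congruence |].
    rewrite <- (sc_comp L _ _ Hab), Hc, sc_comp by exact Hat. exact Hs. }
  rewrite Enu in Hab, Hc.
  exists (F1 al tau). split; [exact Ha | split; [| split; [exact Hab |]]].
  - rewrite <- (rg_comp L _ _ Hab), Hc, rg_comp by exact Hat.
    apply W_red_rg; [unfold red; rewrite Hda; exact Hnu | congruence].
  - apply (F1_F2_unique (F1 al tau) nu al tau Hab Hat); congruence.
Qed.

End RedClosedVertices.

End RedCycles.

End TwoGraph.

Theorem lemma3p3 (L : twograph)
  (Hrf : row_finite L)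
  (Hnoblue : forall l : P L, blue l -> ~ cycle l)
  (Hiso : forall v : V L, exists l : P L,
      red l /\ isolated_cycle l /\ rg L l = v)
  (l1 l2 : P L)
  (H1 : red l1 /\ isolated_cycle l1)
  (H2 : red l2 /\ isolated_cycle l2) :
  (* (1) *)
  (forall mu : P L, red mu -> on_path l1 (rg L mu) ->
     (forall sg, blue sg -> rg L sg = sc L mu -> on_path l2 (sc L sg) ->
        blue (F1 mu sg) /\ rg L (F1 mu sg) = rg L mu /\
        on_path l2 (sc L (F1 mu sg)) /\ dg L (F1 mu sg) = dg L sg) /\
     (forall sg sg', blue sg -> rg L sg = sc L mu -> on_path l2 (sc L sg) ->
        blue sg' -> rg L sg' = sc L mu -> on_path l2 (sc L sg') ->
        F1 mu sg = F1 mu sg' -> sg = sg') /\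
     (forall tau, blue tau -> rg L tau = rg L mu -> on_path l2 (sc L tau) ->
        exists sg, blue sg /\ rg L sg = sc L mu /\ on_path l2 (sc L sg) /\
          F1 mu sg = tau))
  /\
  (* (2) *)
  (forall nu : P L, red nu -> on_path l2 (rg L nu) ->
     (forall sg, blue sg -> on_path l1 (rg L sg) -> sc L sg = rg L nu ->
        blue (F2 sg nu) /\ on_path l1 (rg L (F2 sg nu)) /\
        sc L (F2 sg nu) = sc L nu /\ dg L (F2 sg nu) = dg L sg) /\
     (forall sg sg', blue sg -> on_path l1 (rg L sg) -> sc L sg = rg L nu ->
        blue sg' -> on_path l1 (rg L sg') -> sc L sg' = rg L nu ->
        F2 sg nu = F2 sg' nu -> sg = sg') /\
     (forall tau, blue tau -> on_path l1 (rg L tau) -> sc L tau = sc L nu ->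
        exists sg, blue sg /\ on_path l1 (rg L sg) /\ sc L sg = rg L nu /\
          F2 sg nu = tau)).
Proof.
  destruct H1 as [Hr1 [Hc1 _]], H2 as [Hr2 [Hc2 _]].
  pose proof (on_path_red_sc Hiso l1 Hr1 Hc1) as W1_sc.
  pose proof (on_path_red_rg Hiso l1 Hr1 Hc1) as W1_rg.
  pose proof (on_path_red_sc Hiso l2 Hr2 Hc2) as W2_sc.
  pose proof (on_path_red_rg Hiso l2 Hr2 Hc2) as W2_rg.
  unfold blue. split.
  - intros mu Hmu _. split; [|split].
    + intros sg Hsg Hs Hw.
      destruct (F1_red_maps_to _ W2_rg mu sg Hmu (eq_sym Hs) Hw) as (Hr & Hw' & Hd).
      rewrite Hd. auto.
    + intros sg sg' _ Hs _ _ Hs' _. apply (F1_red_injective Hiso mu); auto.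
    + intros tau Htau Hr Hw.
      destruct (F1_red_surjective Hiso _ W2_sc mu tau Hmu Hr Hw) as (sg & Hd & ? & ? & ?).
      exists sg. rewrite Hd. auto.
  - intros nu Hnu _. split; [|split].
    + intros sg Hsg Hw Hs.
      destruct (F2_red_maps_to _ W1_sc sg nu Hnu Hs Hw) as (Hw' & Hs' & Hd).
      rewrite Hd. auto.
    + intros sg sg' _ _ Hs _ _ Hs'. apply (F2_red_injective Hiso sg sg' nu); auto.
    + intros tau Htau Hw Hs.
      destruct (F2_red_surjective Hiso _ W1_rg nu tau Hnu Hs Hw) as (sg & Hd & ? & ? & ?).
      exists sg. rewrite Hd. auto.
Qed.
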